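(* Let $F$ be the fractal cube defined in the context, and let $Q=\{\mathcal K_\alpha:\alpha\in\{0,1\}^\infty\}\subset C(\mathbb R^3)$ be the set of its connected components. Then $Q$ is the self-similar set (attractor) in $C(\mathbb R^3)$ generated by the two contractions $\widetilde T_0,\widetilde T_1$, i.e. $Q=\widetilde T_0(Q)\cup\widetilde T_1(Q)$. Moreover there is a Hölder homeomorphism $\varphi:Q\to C_{1/3}$ onto the middle-third Cantor set $C_{1/3}\subset[0,1]$ which induces an isomorphism of the self-similar structures, i.e. $\varphi\circ\widetilde T_0=S_0\circ\varphi$ and $\varphi\circ\widetilde T_1=S_1\circ\varphi$ on $Q$, where $S_0(x)=x/3$ and $S_1(x)=x/3+2/3$.
   Context: Let $I=[0,1]^3$. Let $\mathcal D_0=\{(i,2,2),(2,i,2),(2,2,i): i=0,1,2,3,4\}\subset\{0,\ldots,4\}^3$ (the ''Cross'', $13$ elements) and $\mathcal D_1=\{d\in\{0,\ldots,4\}^3:\ \text{at least two coordinates of } d \text{ lie in }\{0,4\}\}$ (the ''Frame'': the $44$ unit cubes lying along the edges of $[0,5]^3$). Put $\mathcal D=\mathcal D_0\cup\mathcal D_1$ (a disjoint union) and let $F\subset\mathbb R^3$ be the unique non-empty compact set with $F=\frac{F+\mathcal D}{5}=\bigcup_{d\in\mathcal D}\frac{F+d}{5}$. For $i=0,1$ define the Hutchinson operator $T_i(A)=\frac{\mathcal D_i+A}{5}=\bigcup_{d\in\mathcal D_i}\frac{d+A}{5}$ on sets $A\subset\mathbb R^3$, and for a finite word $\alpha_1\cdots\alpha_k\in\{0,1\}^k$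 put $T_{\alpha_1\cdots\alpha_k}=T_{\alpha_1}\circ\cdots\circ T_{\alpha_k}$. For an infinite word $\alpha=\alpha_1\alpha_2\ldots\in\{0,1\}^\infty$ put $\mathcal K_\alpha=\bigcap_{k\ge1}T_{\alpha_1\cdots\alpha_k}(I)$; each $\mathcal K_\alpha$ is a connected component of $F$ and $F=\bigcup_{\alpha}\mathcal K_\alpha$. $C(\mathbb R^3)$ denotes the hyperspace of non-empty compact subsets of $\mathbb R^3$ with the Hausdorff metric, and $\widetilde T_i:C(\mathbb R^3)\to C(\mathbb R^3)$, $\widetilde T_i(A)=T_i(A)$, is a contraction with Lipschitz constant $1/5$. *)

(* Points of R^3 are triples (x, y, z) : R * R * R
   (product topology = Euclidean topology). *)
From HB Require Import structures.
From mathcomp Require Import all_boot all_order all_algebra.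
From mathcomp Require Import all_classical all_reals all_analysis.
Set Implicit Arguments. Unset Strict Implicit. Unset Printing Implicit Defensive.
Import Order.TTheory GRing.Theory Num.Theory.
Import numFieldNormedType.Exports.
Local Open Scope classical_set_scope.
Local Open Scope ring_scope.

Notation pt R := (R * R * R)%type.

Section Fractal.
Variable R : realType.

Definition in04 (n : nat) : bool := (n == 0%N) || (n == 4%N).

Definition Dcross (d : nat * nat * nat) : bool :=
  let: (a, b, c) := d in
  [|| [&& (a < 5)%N, b == 2%N & c == 2%N],
      [&& a == 2%N, (b < 5)%N & c == 2%N]
    | [&& a == 2%N, b == 2%N & (c < 5)%N]].

Definition Dframe (d : nat * nat * nat) : bool :=
  let: (a, b, c) := d in
  [&& (a < 5)%N, (b < 5)%N, (c < 5)%N &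
      [|| in04 a && in04 b, in04 a && in04 c | in04 b && in04 c]].

Definition Dig (i : bool) : nat * nat * nat -> bool :=
  if i then Dframe else Dcross.

Definition T (i : bool) (A : set (pt R)) : set (pt R) :=
  [set p | exists d : nat * nat * nat, Dig i d /\ exists a : pt R, A a /\
     p = (((d.1.1)%:R + a.1.1) / 5, ((d.1.2)%:R + a.1.2) / 5,
          ((d.2)%:R + a.2) / 5)].

Definition unit_cube : set (pt R) :=
  [set p | (0 <= p.1.1 <= 1) /\ (0 <= p.1.2 <= 1) /\ (0 <= p.2 <= 1)].

(* infinite words alpha = alpha_1 alpha_2 ... encoded as alpha 0, alpha 1, ... *)
(* Tw alpha k A = T_{alpha_1} o ... o T_{alpha_k} (A) *)
Fixpoint Tw (alpha : nat -> bool) (k : nat) (A : set (pt R)) : set (pt R) :=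
  match k with
  | 0%N => A
  | k'.+1 => Tw alpha k' (T (alpha k') A)
  end.

Definition Kc (alpha : nat -> bool) : set (pt R) :=
  [set p | forall k : nat, Tw alpha k.+1 unit_cube p].

Definition Qc : set (set (pt R)) := [set A | exists alpha, A = Kc alpha].

Definition edist (p q : pt R) : R :=
  Num.sqrt ((p.1.1 - q.1.1) ^+ 2 + (p.1.2 - q.1.2) ^+ 2 + (p.2 - q.2) ^+ 2).

Definition hausdorff (A B : set (pt R)) : R :=
  inf [set r : R | 0 <= r /\
         (forall a, A a -> exists2 b, B b & edist a b <= r) /\
         (forall b, B b -> exists2 a, A a & edist a b <= r)].

Definition S0 (x : R) : R := x / 3.
Definition S1 (x : R) : R := x / 3 + 2 / 3.

Fixpoint cantor_step (n : nat) : set R :=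
  match n with
  | 0%N => [set x | 0 <= x <= 1]
  | n'.+1 => (S0 @` cantor_step n') `|` (S1 @` cantor_step n')
  end.

Definition cantor : set R := [set x | forall n, cantor_step n x].

End Fractal.

(* A component K_alpha is determined by its address alpha, and phi sends it to
   the Cantor point sum_j 2 alpha_j 3^-(j+1); T_i prepends the letter i to the
   address, which is why phi conjugates T_i to S_i.  Everything metric follows
   from comparing addresses.  If alpha and beta first differ at position n, with
   alpha_n the Cross and beta_n the Frame, then K_alpha contains a point whose
   y- and z-digits at level n+1 are 2, while every level-(n+1) Frame piece has a
   y- or z-digit in {0, 4}; hence d_H(K_alpha, K_beta) >= 5^-(n+1), whereas
   |phi K_alpha - phi K_beta| <= 3^-n, and 3^-2 <= 5^-1 gives a Hoelder bound
   with exponent 1/2.  Conversely, addresses agreeing up to n put both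
   components in the same level-n cube, so d_H <= 2 * 5^-n. *)

From Pilot Require Import Defs.
From HB Require Import structures.
From mathcomp Require Import all_boot all_order all_algebra.
From mathcomp Require Import all_classical all_reals all_analysis.
From mathcomp Require Import ring lra zify.
Set Implicit Arguments. Unset Strict Implicit. Unset Printing Implicit Defensive.
Import Order.TTheory GRing.Theory Num.Theory.
Import numFieldNormedType.Exports.
Local Open Scope classical_set_scope.
Local Open Scope ring_scope.

Definition tail {T : Type} (e : nat -> T) : nat -> T := fun n => e n.+1.

Section Expansion.
Context {R : realType}.
Variable q : nat.
Hypothesis q_gt1 : (1 < q)%N.

Fixpoint prefix_sum (k : nat) (e : nat -> nat) : R :=
  if k is k'.+1 then ((e 0%N)%:R + prefix_sum k' (tail e)) / q%:R else 0.

Definition digit_seq (e : nat -> nat) := forall j, (e j < q)%N.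

Definition expansion (e : nat -> nat) : R := sup (range (prefix_sum ^~ e)).

Lemma q_gt0 : 0 < q%:R :> R.
Proof. by rewrite ltr0n; lia. Qed.

Lemma expq_gt0 k : 0 < q%:R ^+ k :> R.
Proof. by rewrite exprn_gt0 // q_gt0. Qed.

Lemma q_neq0 : q%:R != 0 :> R.
Proof. by rewrite gt_eqF // q_gt0. Qed.

Lemma invq_ge0 : 0 <= q%:R^-1 :> R.
Proof. by rewrite invr_ge0 ltW // q_gt0. Qed.

Lemma digit_seq_tail e : digit_seq e -> digit_seq (tail e).
Proof. by move=> he j; apply: he. Qed.

Lemma digit_head_le e : digit_seq e -> (e 0%N)%:R + 1 <= q%:R :> R.
Proof. by move=> he; rewrite natr1 ler_nat; apply: he. Qed.

Lemma prefix_sum_ge0 k e : 0 <= prefix_sum k e.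
Proof. by elim: k e => [//|k IH] e /=; rewrite divr_ge0 ?addr_ge0 ?IH // ltW // q_gt0. Qed.

Lemma prefix_sum_le1 k e : digit_seq e -> prefix_sum k e <= 1.
Proof.
elim: k e => [//|k IH] e he /=; rewrite ler_pdivrMr ?q_gt0 // mul1r.
by have := IH _ (digit_seq_tail he); have := digit_head_le he; lra.
Qed.

Lemma prefix_sum_add_invq k e (x : R) :
  prefix_sum k.+1 e + (q%:R ^+ k.+1)^-1 * x =
  ((e 0%N)%:R + (prefix_sum k (tail e) + (q%:R ^+ k)^-1 * x)) / q%:R.
Proof. by rewrite /= exprS invfM; field; rewrite expf_neq0 ?q_neq0. Qed.

Lemma prefix_sum_le m k e : digit_seq e ->
  prefix_sum m e <= prefix_sum k e + (q%:R ^+ k)^-1.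
Proof.
elim: k e m => [|k IH] e [|m] he.
- by rewrite expr0 invr1 add0r.
- by rewrite expr0 invr1 add0r; apply: prefix_sum_le1.
- by rewrite addr_ge0 ?prefix_sum_ge0 // invr_ge0 ltW ?expq_gt0.
rewrite -[(q%:R ^+ _.+1)^-1]mulr1 prefix_sum_add_invq mulr1 /=.
by rewrite ler_wpM2r ?invq_ge0 // lerD2l; apply/IH/digit_seq_tail.
Qed.

Lemma has_sup_prefix_sum e : digit_seq e -> has_sup (range (prefix_sum ^~ e)).
Proof.
by move=> he; split; [exists 0, 0%N | exists 1 => _ [k _ <-]; apply: prefix_sum_le1].
Qed.

Lemma prefix_sum_le_expansion k e : digit_seq e -> prefix_sum k e <= expansion e.
Proof. by move=> he; apply: sup_upper_bound (has_sup_prefix_sum he) _ _; exists k. Qed.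

Lemma expansion_le_prefix_sum k e : digit_seq e ->
  expansion e <= prefix_sum k e + (q%:R ^+ k)^-1.
Proof.
move=> he; apply: ge_sup; first by exists 0, 0%N.
by move=> _ [m _ <-]; apply: prefix_sum_le.
Qed.

Lemma expansion_itv e : digit_seq e -> 0 <= expansion e <= 1.
Proof.
move=> he; have := expansion_le_prefix_sum 0 he.
by rewrite (le_trans _ (prefix_sum_le_expansion 0 he)) //= expr0 invr1 add0r.
Qed.

Lemma exists_inv_expq_lt (eps : R) : 0 < eps -> exists n, (q%:R ^+ n)^-1 < eps.
Proof.
move=> eps_gt0; have inv_ge0 : 0 <= eps^-1 by rewrite invr_ge0 ltW.
exists (Num.Def.archi_bound eps^-1).
rewrite -[X in _ < X]invrK ltf_pV2 ?posrE ?expq_gt0 ?invr_gt0 //.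
by rewrite (lt_trans (archi_boundP inv_ge0)) // -natrX ltr_nat ltn_expl.
Qed.

Lemma expansion_unique e y : digit_seq e ->
  (forall k, prefix_sum k e <= y <= prefix_sum k e + (q%:R ^+ k)^-1) ->
  y = expansion e.
Proof.
move=> he hy; apply/eqP; rewrite -subr_eq0 -normr_le0 leNgt; apply/negP.
move=> /exists_inv_expq_lt [k]; rewrite ltNge => /negP; apply.
have /andP [h1 h2] := hy k; have h3 := prefix_sum_le_expansion k he.
have h4 := expansion_le_prefix_sum k he.
by rewrite ler_norml; apply/andP; split; lra.
Qed.

Lemma expansion_cons e : digit_seq e ->
  expansion e = ((e 0%N)%:R + expansion (tail e)) / q%:R.
Proof.
move=> he; have he' := digit_seq_tail he; symmetry; apply: expansion_unique => // -[|k].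
  rewrite /= expr0 invr1 add0r; have /andP [t0 t1] := expansion_itv he'.
  rewrite divr_ge0 ?addr_ge0 ?(ltW q_gt0) //= ler_pdivrMr ?q_gt0 // mul1r.
  by have := digit_head_le he; lra.
rewrite -[(q%:R ^+ _.+1)^-1]mulr1 prefix_sum_add_invq mulr1 /=.
have h1 := prefix_sum_le_expansion k he'; have h2 := expansion_le_prefix_sum k he'.
by rewrite !ler_wpM2r ?invq_ge0 ?lerD2l.
Qed.

Lemma eq_prefix_sum k e e' : (forall j, (j < k)%N -> e j = e' j) ->
  prefix_sum k e = prefix_sum k e'.
Proof.
elim: k e e' => [//|k IH] e e' h /=.
by rewrite (h 0%N) // (IH (tail e) (tail e')) // => j jk; apply: h.
Qed.

Lemma prefix_sumS k e :
  prefix_sum k.+1 e = ((e 0%N)%:R + prefix_sum k (tail e)) / q%:R.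
Proof. by []. Qed.

Lemma prefix_sumSr k e :
  prefix_sum k.+1 e = prefix_sum k e + (e k)%:R / q%:R ^+ k.+1.
Proof.
elim: k e => [|k IH] e; first by rewrite /= expr1 addr0 add0r.
rewrite prefix_sumS IH prefix_sumS !exprS.
by field; rewrite expf_neq0 ?q_neq0.
Qed.

Lemma prefix_sum_natr k e : exists N : nat, prefix_sum k e * q%:R ^+ k = N%:R.
Proof.
elim: k => [|k [N HN]]; first by exists 0%N; rewrite /= mul0r.
exists (N * q + e k)%N; rewrite prefix_sumSr natrD natrM -HN exprS.
by field; rewrite expf_neq0 ?q_neq0.
Qed.

End Expansion.

Lemma bigcap_bigcup_nonincreasing {X Y : Type} (D : set X) (A : X -> nat -> set Y) :
  finite_set D -> (forall x m n, (m <= n)%N -> A x n `<=` A x m) ->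
  \bigcap_k \bigcup_(x in D) A x k `<=` \bigcup_(x in D) \bigcap_k A x k.
Proof.
move=> finD decrA y yA.
have /choice [u uP] : forall k, exists x, D x /\ A x k y.
  by move=> k; have [x Dx Axy] := yA k Logic.I; exists x.
have range_u : finite_set (range u).
  by apply: sub_finite_set finD => _ [k _ <-]; case: (uP k).
(* pigeonhole: some piece x is chosen at infinitely many levels *)
have [x [S infS S_u]] := finite_range_cst_subsequence range_u.
have [k0 /S_u u_k0] := infinite_setN0 infS.
exists x; first by case: (uP k0); rewrite u_k0.
move=> k _; have [m [Sm /negP]] := infinite_setN0 (infinite_setD infS (finite_II k)).
rewrite -leqNgt => km; apply: decrA km _ _.
by case: (uP m); rewrite (S_u m).1.
Qed.

Definition agree_below (n : nat) (a b : nat -> bool) := forall j, (j < n)%N -> a j = b j.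

Definition wcons (b : bool) (a : nat -> bool) : nat -> bool :=
  fun n => if n is n'.+1 then a n' else b.

Definition wdrop (n : nat) (a : nat -> bool) : nat -> bool := fun j => a (n + j)%N.

Section Pieces.
Context {R : realType}.
Local Notation I := (@unit_cube R).
Local Notation Kc := (@Kc R).
Implicit Types (A B X Y : set (pt R)) (p : pt R) (a b : nat -> bool).

Definition digit_map (d : nat * nat * nat) (p : pt R) : pt R :=
  (((d.1.1)%:R + p.1.1) / 5, ((d.1.2)%:R + p.1.2) / 5, ((d.2)%:R + p.2) / 5).

Definition digit_unmap (d : nat * nat * nat) (p : pt R) : pt R :=
  (5 * p.1.1 - (d.1.1)%:R, 5 * p.1.2 - (d.1.2)%:R, 5 * p.2 - (d.2)%:R).

Lemma digit_mapK d : cancel (digit_map d) (digit_unmap d).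
Proof. by case=> [[x y] z]; rewrite /digit_map /digit_unmap /=; congr (_, _, _); field. Qed.

Lemma digit_unmapK d : cancel (digit_unmap d) (digit_map d).
Proof. by case=> [[x y] z]; rewrite /digit_map /digit_unmap /=; congr (_, _, _); field. Qed.

Lemma T_preimage i A :
  T i A = \bigcup_(d in [set d | Dig i d]) (digit_unmap d @^-1` A).
Proof.
apply/seteqP; split => p.
- by case=> d [Dd [x [Ax ->]]]; exists d; rewrite // /preimage /= digit_mapK.
- case=> d Dd Ap; exists d; split => //; exists (digit_unmap d p); split => //.
  exact: esym (digit_unmapK d p).
Qed.

Lemma Dig_lt5 i d : Dig i d -> [/\ (d.1.1 < 5)%N, (d.1.2 < 5)%N & (d.2 < 5)%N].
Proof.
case: d => [[x y] z]; case: i => /=; first by case/and4P.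
by case/or3P => /and3P [] => [? /eqP-> /eqP->|/eqP-> ? /eqP->|/eqP-> /eqP-> ?].
Qed.

Lemma finite_Dig i : finite_set [set d | Dig i d].
Proof.
apply: (@sub_finite_set _ _ (`I_5 `*` `I_5 `*` `I_5)); first by move=> d /Dig_lt5 [? ? ?].
by apply: finite_setX; [apply: finite_setX|]; apply: finite_II.
Qed.

Lemma T_subset i A B : A `<=` B -> T i A `<=` T i B.
Proof. by move=> AB; rewrite !T_preimage => p [d Dd Ap]; exists d => //; apply: AB. Qed.

Lemma T_unit_cube i : T i I `<=` I.
Proof.
have coord_itv (m : nat) (t : R) : (m < 5)%N -> 0 <= t <= 1 -> 0 <= (m%:R + t) / 5 <= 1.
  rewrite ltnS -(ler_nat R) => m_le4 /andP [t0 t1]; have := ler0n R m.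
  by move=> m0; apply/andP; split; lra.
move=> _ [d [/Dig_lt5 [d1 d2 d3] [x [[x1 [x2 x3]] ->]]]].
by split; [|split]; apply: coord_itv.
Qed.

Lemma Tw_tail a k A : Tw a k.+1 A = T (a 0%N) (Tw (tail a) k A).
Proof. by elim: k a A => [//|k IH] a A; rewrite /= -IH. Qed.

Lemma Tw_subset a k A B : A `<=` B -> Tw a k A `<=` Tw a k B.
Proof. by elim: k A B => [//|k IH] A B AB /=; apply/IH/T_subset. Qed.

Lemma Tw_unit_cube a k : Tw a k I `<=` I.
Proof. by elim: k => [//|k IH] /=; apply: subset_trans IH; apply/Tw_subset/T_unit_cube. Qed.

Lemma Tw_nonincreasing a k m : (k <= m)%N -> Tw a m I `<=` Tw a k I.
Proof.
move=> /subnK <-; elim: (m - k)%N => [//|n IH] /=.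
by apply: subset_trans IH; apply/Tw_subset/T_unit_cube.
Qed.

Lemma Kc_unit_cube a : Kc a `<=` I.
Proof. by move=> p /(_ 0%N); apply: Tw_unit_cube. Qed.

Lemma Kc_bigcap a : Kc a = \bigcap_k Tw a k.+1 I.
Proof. by apply/seteqP; split => p Kp k //; apply: Kp. Qed.

Lemma Kc_tail a : Kc a = T (a 0%N) (Kc (tail a)).
Proof.
apply/seteqP; split => p.
- rewrite Kc_bigcap T_preimage => Kp.
  have [d Dd Kd] : (\bigcup_(d in [set d | Dig (a 0%N) d])
      \bigcap_k (digit_unmap d @^-1` Tw (tail a) k I)) p.
    apply: (bigcap_bigcup_nonincreasing (finite_Dig _)) => [d m n mn x|k _].
      exact: Tw_nonincreasing.
    by rewrite -T_preimage -Tw_tail; apply: Kp.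
  by exists d => // k; apply: Kd.
- move=> Tp k; rewrite Tw_tail; apply: T_subset Tp => x Kx.
  by case: k => [|k]; [apply: Kc_unit_cube Kx | apply: Kx].
Qed.

Lemma T_Kc (i : bool) a : T i (Kc a) = Kc (wcons i a).
Proof. by rewrite [RHS]Kc_tail. Qed.

Lemma Kc_Tw a n : Kc a = Tw a n (Kc (wdrop n a)).
Proof.
elim: n a => [|n IH] a; first by congr Kc; apply: funext => j; rewrite /wdrop add0n.
by rewrite Tw_tail Kc_tail (IH (tail a)).
Qed.

Lemma Tw_agree a b n X : agree_below n a b -> Tw a n X = Tw b n X.
Proof.
elim: n X => [//|n IH] X ab /=; rewrite (ab n) //.
by apply: IH => j jn; apply/ab/ltnW.
Qed.

Definition cube_map (n : nat) (c : nat * nat * nat) (p : pt R) : pt R :=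
  (((c.1.1)%:R + p.1.1) / 5 ^+ n, ((c.1.2)%:R + p.1.2) / 5 ^+ n,
   ((c.2)%:R + p.2) / 5 ^+ n).

Lemma cube_map0 p : cube_map 0 (0, 0, 0)%N p = p.
Proof. by case: p => [[x y] z]; rewrite /cube_map /= expr0 !divr1 !add0r. Qed.

Lemma cube_map_digit_map n c d p : cube_map n c (digit_map d p) =
  cube_map n.+1 (5 * c.1.1 + d.1.1, 5 * c.1.2 + d.1.2, 5 * c.2 + d.2)%N p.
Proof.
rewrite /cube_map /digit_map /= !natrD !exprS.
by congr (_, _, _); field; rewrite expf_neq0.
Qed.

(* The address c of the level-n cube containing p does not depend on X. *)
Lemma Tw_address a n X p : Tw a n X p -> exists c, exists2 x, X x &
  p = cube_map n c x /\ (forall Y y, Y y -> Tw a n Y (cube_map n c y)).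
Proof.
elim: n X p => [|n IH] X p.
  by move=> Xp; exists (0, 0, 0)%N, p; rewrite ?cube_map0 //; split => // Y y; rewrite cube_map0.
move=> /= /IH [c [_ [d [Dd [x [Xx ->]]]] [-> Tw_c]]].
exists (5 * c.1.1 + d.1.1, 5 * c.1.2 + d.1.2, 5 * c.2 + d.2)%N, x => //.
split; first by rewrite cube_map_digit_map.
move=> Y y Yy /=; rewrite -cube_map_digit_map; apply: Tw_c.
by exists d; split => //; exists y.
Qed.

End Pieces.

Section Separation.
Context {R : realType}.
Local Notation I := (@unit_cube R).
Local Notation Kc := (@Kc R).
Implicit Types (p : pt R) (a b : nat -> bool).

Lemma edistC p p' : Defs.edist p p' = Defs.edist p' p.
Proof.
by rewrite /Defs.edist -!(sqrrN (p.1.1 - _)) -!(sqrrN (p.1.2 - _)) -(sqrrN (p.2 - _)) !opprB.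
Qed.

Lemma edist_xx p : Defs.edist p p = 0.
Proof. by rewrite /Defs.edist !subrr expr0n /= !addr0 sqrtr0. Qed.

Lemma edist_ge_y p p' : `|p.1.2 - p'.1.2| <= Defs.edist p p'.
Proof.
rewrite /Defs.edist -sqrtr_sqr ler_sqrt ?addr_ge0 ?sqr_ge0 //.
by have := sqr_ge0 (p.1.1 - p'.1.1); have := sqr_ge0 (p.2 - p'.2); lra.
Qed.

Lemma edist_ge_z p p' : `|p.2 - p'.2| <= Defs.edist p p'.
Proof.
rewrite /Defs.edist -sqrtr_sqr ler_sqrt ?addr_ge0 ?sqr_ge0 //.
by have := sqr_ge0 (p.1.1 - p'.1.1); have := sqr_ge0 (p.1.2 - p'.1.2); lra.
Qed.

Lemma edist_le p p' s : 0 <= s -> `|p.1.1 - p'.1.1| <= s ->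
  `|p.1.2 - p'.1.2| <= s -> `|p.2 - p'.2| <= s -> Defs.edist p p' <= 2 * s.
Proof.
move=> s0 h1 h2 h3; rewrite -[2 * s]ger0_norm ?mulr_ge0 // -sqrtr_sqr.
rewrite ler_sqrt ?sqr_ge0 //.
rewrite -[(p.1.1 - _) ^+ 2]real_normK ?num_real // -[(p.1.2 - _) ^+ 2]real_normK ?num_real //.
rewrite -[(p.2 - _) ^+ 2]real_normK ?num_real //.
have := normr_ge0 (p.1.1 - p'.1.1); have := normr_ge0 (p.1.2 - p'.1.2).
have := normr_ge0 (p.2 - p'.2); nra.
Qed.

Definition axis_digit a j := if a j then 0%N else 2%N.

(* A point of Kc a on the segment x = 0, z = 1/2: at every level it uses the
   digit (0, 0, 2) of the Frame or the digit (0, 2, 2) of the Cross. *)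
Definition axis_point a : pt R :=
  (0, expansion 5 (axis_digit a), expansion 5 (fun=> 2%N)).

Lemma digit_seq_axis a : digit_seq 5 (axis_digit a).
Proof. by move=> j; rewrite /axis_digit; case: (a j). Qed.

Lemma digit_seq_two : digit_seq 5 (fun=> 2%N).
Proof. by []. Qed.

Lemma axis_point_unit_cube a : I (axis_point a).
Proof.
split; first by rewrite lexx ler01.
by split; [exact: (expansion_itv _ (digit_seq_axis a)) | exact: (expansion_itv _ digit_seq_two)].
Qed.

Lemma axis_point_Tw a k : Tw a k I (axis_point a).
Proof.
elim: k a => [|k IH] a; first exact: axis_point_unit_cube.
rewrite Tw_tail T_preimage; exists (0, axis_digit a 0, 2)%N.
  by rewrite /axis_digit; case: (a 0%N).
suff E : digit_unmap (0, axis_digit a 0, 2)%N (axis_point a) = axis_point (tail a).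
  by rewrite /preimage /= E; apply: IH.
rewrite /digit_unmap /axis_point /= (expansion_cons _ (digit_seq_axis a)) //.
rewrite {1}[expansion _ (fun=> 2%N)](expansion_cons _ digit_seq_two) //.
by congr (_, _, _); [rewrite mulr0 subr0 | field | field].
Qed.

Lemma Kc_axis_point a : Kc a (axis_point a).
Proof. by move=> k; apply: axis_point_Tw. Qed.

Lemma Kc_neq0 a : Kc a !=set0.
Proof. by exists (axis_point a); apply: Kc_axis_point. Qed.

Lemma border_digit_gap (N c d : nat) (r u : R) : in04 d ->
  0 <= r <= 1 -> 0 <= u <= 1 ->
  1 <= `|(5 * N%:R + 2 + r) - (5 * c%:R + d%:R + u)|.
Proof.
move=> /orP [] /eqP -> /andP [r0 r1] /andP [u0 u1]; rewrite ler_normr; apply/orP.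
- have [cN|Nc] := leqP c N.
    have le_cN : c%:R <= N%:R :> R by rewrite ler_nat.
    by left; lra.
  have lt_Nc : N%:R + 1 <= c%:R :> R by rewrite natr1 ler_nat.
  by right; lra.
- have [Nc|cN] := ltnP c N.
    have lt_cN : c%:R + 1 <= N%:R :> R by rewrite natr1 ler_nat.
    by left; lra.
  have le_Nc : N%:R <= c%:R :> R by rewrite ler_nat.
  by right; lra.
Qed.

(* Scaling by 5^(n+1) puts the digit-2 expansion at 5N + 2 + r and the point
   at 5c + d + u, with r, u in [0, 1] and d a border digit. *)
Lemma expansion_digit2_gap (e : nat -> nat) n (c d : nat) (u : R) :
  digit_seq 5 e -> e n = 2%N -> in04 d -> 0 <= u <= 1 ->
  (5 ^+ n.+1)^-1 <= `|expansion 5 e - (c%:R + (d%:R + u) / 5) / 5 ^+ n|.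
Proof.
move=> he en d04 u01.
have h1 := @prefix_sum_le_expansion R 5 isT n.+1 _ he.
have h2 := @expansion_le_prefix_sum R 5 isT n.+1 _ he.
have [N HN] := @prefix_sum_natr R 5 isT n e.
rewrite !(@prefix_sumSr R 5 isT) en in h1 h2.
set Y := expansion 5 e in h1 h2 *.
set r := (Y - prefix_sum 5 n e - 2%:R / 5%:R ^+ n.+1) * 5 ^+ n.+1.
have pow_gt0 : 0 < 5 ^+ n.+1 :> R by rewrite exprn_gt0.
have r01 : 0 <= r <= 1.
  rewrite /r; apply/andP; split.
    by rewrite mulr_ge0 ?(ltW pow_gt0) // subr_ge0; lra.
  by rewrite -ler_pdivlMr // mul1r; lra.
have := border_digit_gap N c d04 r01 u01.
have -> : (5 * N%:R + 2 + r) - (5 * c%:R + d%:R + u) =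
    (Y - (c%:R + (d%:R + u) / 5) / 5 ^+ n) * 5 ^+ n.+1.
  by rewrite /r -HN !exprS; field; rewrite expf_neq0.
by rewrite normrM (ger0_norm (ltW pow_gt0)) -ler_pdivrMr // div1r.
Qed.

Lemma Dframe_border d : Dframe d -> in04 d.1.2 || in04 d.2.
Proof.
case: d => [[x y] z] /and4P [_ _ _] /or3P [/andP [_ ->] | /andP [_ ->] | /andP [-> _]] //.
by rewrite orbT.
Qed.

(* The Frame digits have a y- or z-digit in {0, 4}, whereas the axis point of a
   Cross word has y- and z-digit 2 at that level. *)
Lemma axis_point_far a b n y : a n = false -> b n = true -> Kc b y ->
  (5 ^+ n.+1)^-1 <= Defs.edist (axis_point a) y.
Proof.
move=> an bn /(_ n) /=; rewrite bn => /Tw_address [c [_ [d [Dd [u [[_ [u2 u3]] ->]]]] [-> _]]].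
case/orP: (Dframe_border Dd) => d04.
- apply: le_trans (edist_ge_y _ _); rewrite /axis_point /cube_map /=.
  by apply: expansion_digit2_gap => //; [exact: digit_seq_axis | rewrite /axis_digit an].
- apply: le_trans (edist_ge_z _ _); rewrite /axis_point /cube_map /=.
  exact: expansion_digit2_gap.
Qed.

Lemma Kc_inj : injective Kc.
Proof.
move=> a b Kab; apply: funext => n; apply: contrapT => ne.
have pow_gt0 : 0 < (5 ^+ n.+1)^-1 :> R by rewrite invr_gt0 exprn_gt0.
move: ne; case an: (a n); case bn: (b n) => // _.
- have := axis_point_far bn an (_ : Kc a (axis_point b)).
  by rewrite Kab edist_xx => /(_ (Kc_axis_point b)); lra.
- have := axis_point_far an bn (_ : Kc b (axis_point a)).
  by rewrite -Kab edist_xx => /(_ (Kc_axis_point a)); lra.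
Qed.

End Separation.

Section HausdorffKc.
Context {R : realType}.
Local Notation I := (@unit_cube R).
Local Notation Kc := (@Kc R).
Implicit Types (A B : set (pt R)) (p : pt R) (a b : nat -> bool).

Definition hausdorff_bounds A B := [set r : R | 0 <= r /\
  (forall x, A x -> exists2 y, B y & Defs.edist x y <= r) /\
  (forall y, B y -> exists2 x, A x & Defs.edist x y <= r)].

Lemma hausdorffE A B : hausdorff A B = inf (hausdorff_bounds A B).
Proof. by []. Qed.

Lemma hausdorff_bounds_sym A B : hausdorff_bounds A B `<=` hausdorff_bounds B A.
Proof.
move=> r [r0 [AB BA]]; split=> //; split.
- by move=> y /BA [x Ax h]; exists x; rewrite // edistC.
- by move=> x /AB [y By h]; exists y; rewrite // edistC.
Qed.

Lemma hausdorffC A B : hausdorff A B = hausdorff B A.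
Proof.
by rewrite !hausdorffE; congr inf; apply/seteqP; split; apply: hausdorff_bounds_sym.
Qed.

Lemma unit_cube_edist_le p p' : I p -> I p' -> Defs.edist p p' <= 2.
Proof.
move=> [/andP [? ?] [/andP [? ?] /andP [? ?]]] [/andP [? ?] [/andP [? ?] /andP [? ?]]].
by rewrite -[2]mulr1; apply: edist_le => //; rewrite ler_norml; apply/andP; split; lra.
Qed.

Lemma hausdorff_bounds2 A B : A `<=` I -> B `<=` I -> A !=set0 -> B !=set0 ->
  hausdorff_bounds A B 2.
Proof.
move=> AI BI [x0 Ax0] [y0 By0]; split=> //; split.
- by move=> x Ax; exists y0 => //; apply: unit_cube_edist_le; [apply: AI | apply: BI].
- by move=> y By; exists x0 => //; apply: unit_cube_edist_le; [apply: AI | apply: BI].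
Qed.

Lemma hausdorff_ge A B r : A `<=` I -> B `<=` I -> A !=set0 -> B !=set0 ->
  (exists2 x, A x & forall y, B y -> r <= Defs.edist x y) -> r <= hausdorff A B.
Proof.
move=> AI BI A0 B0 [x Ax far_x]; apply: lb_le_inf; first by exists 2; apply: hausdorff_bounds2.
by move=> s [_ [/(_ x Ax) [y By xy] _]]; apply: le_trans (far_x y By) xy.
Qed.

Lemma hausdorff_le A B r : 0 <= r ->
  (forall x, A x -> exists2 y, B y & Defs.edist x y <= r) ->
  (forall y, B y -> exists2 x, A x & Defs.edist x y <= r) -> hausdorff A B <= r.
Proof. by move=> r0 AB BA; apply: ge_inf; [exists 0 => s [] | split]. Qed.

Lemma hausdorff_Kc_ge_cross_frame a b n : a n = false -> b n = true ->
  (5 ^+ n.+1)^-1 <= hausdorff (Kc a) (Kc b).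
Proof.
move=> an bn; apply: hausdorff_ge; try exact: Kc_unit_cube; try exact: Kc_neq0.
by exists (axis_point a); [apply: Kc_axis_point | move=> y; apply: axis_point_far].
Qed.

Lemma hausdorff_Kc_ge a b n : a n != b n ->
  (5 ^+ n.+1)^-1 <= hausdorff (Kc a) (Kc b).
Proof.
case an: (a n); case bn: (b n) => // _; last exact: hausdorff_Kc_ge_cross_frame.
by rewrite hausdorffC; apply: hausdorff_Kc_ge_cross_frame.
Qed.

Lemma cube_coord_close (c x y M : R) : 0 < M -> 0 <= x <= 1 -> 0 <= y <= 1 ->
  `|(c + x) / M - (c + y) / M| <= M^-1.
Proof.
move=> M0 x01 y01.
have -> : (c + x) / M - (c + y) / M = (x - y) * M^-1 by field; rewrite gt_eqF.
rewrite normrM [`|M^-1|]gtr0_norm ?invr_gt0 // ger_pMl ?invr_gt0 //.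
by rewrite ler_norml; apply/andP; split; lra.
Qed.

(* Words agreeing below n share their level-n cube, of side 5^-n. *)
Lemma Kc_close a b n x : agree_below n a b -> Kc a x ->
  exists2 y, Kc b y & Defs.edist x y <= 2 * (5 ^+ n)^-1.
Proof.
move=> ab; rewrite (Kc_Tw a n) => /Tw_address [c [x0 Kx0 [-> Tw_c]]].
exists (cube_map n c (axis_point (wdrop n b))).
  by rewrite (Kc_Tw b n) -(Tw_agree _ ab); apply/Tw_c/Kc_axis_point.
have pow_gt0 : 0 < 5 ^+ n :> R by rewrite exprn_gt0.
have [x1 [x2 x3]] := Kc_unit_cube Kx0.
have [y1 [y2 y3]] : I (axis_point (wdrop n b)) := axis_point_unit_cube _.
apply: edist_le; first by rewrite invr_ge0 ltW.
all: exact: cube_coord_close.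
Qed.

Lemma hausdorff_Kc_le a b n : agree_below n a b ->
  hausdorff (Kc a) (Kc b) <= 2 * (5 ^+ n)^-1.
Proof.
move=> ab; apply: hausdorff_le; first by rewrite mulr_ge0 // invr_ge0 exprn_ge0.
- by move=> x; apply: Kc_close.
- move=> y /(Kc_close (fun j jn => esym (ab j jn))) [x Kx xy].
  by exists x; rewrite // edistC.
Qed.

End HausdorffKc.

Lemma first_diff (a b : nat -> bool) j : a j != b j ->
  exists2 m, (m <= j)%N & agree_below m a b /\ a m != b m.
Proof.
move=> abj; have [m abm min_m] := ex_minnP (ex_intro (fun j => a j != b j) j abj).
exists m; first exact: min_m.
split=> // i im; apply/eqP; apply: contraTT im => abi.
by rewrite -leqNgt min_m.
Qed.

Section CantorCoding.
Context {R : realType}.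
Implicit Types (a b : nat -> bool) (x : R).

Definition cantor_digit a j := if a j then 2%N else 0%N.

Definition cantor_point a : R := expansion 3 (cantor_digit a).

Lemma digit_seq_cantor a : digit_seq 3 (cantor_digit a).
Proof. by move=> j; rewrite /cantor_digit; case: (a j). Qed.

Lemma cantor_point_wcons (i : bool) a :
  cantor_point (wcons i a) = if i then S1 (cantor_point a) else S0 (cantor_point a).
Proof.
rewrite /cantor_point (expansion_cons _ (digit_seq_cantor _)) //.
by case: i; rewrite /S0 /S1 /cantor_digit /=; [field | rewrite add0r].
Qed.

Lemma cantor_point_agree a b n : agree_below n a b ->
  `|cantor_point a - cantor_point b| <= (3 ^+ n)^-1.
Proof.
move=> ab; have e : prefix_sum 3 n (cantor_digit a) = prefix_sum 3 n (cantor_digit b) :> R.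
  by apply: eq_prefix_sum => j jn; rewrite /cantor_digit ab.
have := @prefix_sum_le_expansion R 3 isT n _ (digit_seq_cantor a).
have := @expansion_le_prefix_sum R 3 isT n _ (digit_seq_cantor a).
have := @prefix_sum_le_expansion R 3 isT n _ (digit_seq_cantor b).
have := @expansion_le_prefix_sum R 3 isT n _ (digit_seq_cantor b).
by rewrite /cantor_point e => *; rewrite ler_norml; apply/andP; split; lra.
Qed.

(* At the first difference one expansion has digit 2 and the other digit 0;
   the tails cannot make up for the gap of width 3^-(n+1) between them. *)
Lemma cantor_point_diff a b n : agree_below n a b -> a n != b n ->
  (3 ^+ n.+1)^-1 <= `|cantor_point a - cantor_point b|.
Proof.
wlog [an bn] : a b / a n = true /\ b n = false.
  move=> wlog_ab ab; case an: (a n); case bn: (b n) => // _.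
  - by apply: wlog_ab; rewrite ?an ?bn.
  - by rewrite distrC; apply: wlog_ab; rewrite ?an ?bn // => j /ab.
move=> ab _.
have e : prefix_sum 3 n (cantor_digit a) = prefix_sum 3 n (cantor_digit b) :> R.
  by apply: eq_prefix_sum => j jn; rewrite /cantor_digit ab.
have := @prefix_sum_le_expansion R 3 isT n.+1 _ (digit_seq_cantor a).
have := @expansion_le_prefix_sum R 3 isT n.+1 _ (digit_seq_cantor b).
rewrite !(@prefix_sumSr R 3 isT) /cantor_point /cantor_digit an bn e mul0r addr0.
have : 0 <= (3 ^+ n.+1)^-1 :> R by rewrite invr_ge0 exprn_ge0.
by move=> *; rewrite ler_normr; apply/orP; left; lra.
Qed.

Lemma cantor_point_inj : injective cantor_point.
Proof.
move=> a b ab; apply: funext => j; apply/eqP; apply: contraT => /first_diff [m _ [abm ne]].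
have := cantor_point_diff abm ne; rewrite ab subrr normr0 leNgt.
by rewrite invr_gt0 exprn_gt0.
Qed.

Lemma cantor_point_close a b n :
  `|cantor_point a - cantor_point b| < (3 ^+ n)^-1 -> agree_below n a b.
Proof.
move=> close j jn; apply/eqP; apply: contraT => /first_diff [m mj [abm ne]].
have := cantor_point_diff abm ne; rewrite leNgt (lt_le_trans close) //.
rewrite lef_pV2 ?posrE ?exprn_gt0 // -!natrX ler_nat leq_pexp2l //.
exact: leq_ltn_trans mj jn.
Qed.

Lemma cantor_step_itv n x : cantor_step n x -> 0 <= x <= 1.
Proof.
elim: n x => [//|n IH] x [] [y /IH /andP [y0 y1] <-]; rewrite /S0 /S1.
all: by apply/andP; split; lra.
Qed.

Lemma cantor_point_cantor a : cantor (cantor_point a).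
Proof.
move=> n; elim: n a => [|n IH] a.
  exact: expansion_itv (digit_seq_cantor a).
have -> : a = wcons (a 0%N) (tail a) by apply: funext => -[].
rewrite cantor_point_wcons; case: (a 0%N); [right | left]; exists (cantor_point (tail a)) => //.
all: exact: IH.
Qed.

(* The inverse of S0 on [0, 1/3] and of S1 on [2/3, 1]. *)
Definition cantor_shift x : R := if 2^-1 <= x then 3 * x - 2 else 3 * x.

Definition cantor_word x j := 2^-1 <= iter j cantor_shift x.

Lemma cantor_shift_cantor x : cantor x -> cantor (cantor_shift x).
Proof.
move=> cx n; have := cx n.+1; rewrite /cantor_shift.
case: ifPn => x_ge [] [y cy yx]; have /andP [y0 y1] := cantor_step_itv cy.
all: rewrite -yx /S0 /S1 -?ltNge in x_ge *.
- by lra.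
- by rewrite (_ : 3 * _ - 2 = y) //; field.
- by rewrite (_ : 3 * _ = y) //; field.
- by lra.
Qed.

Lemma cantor_word_prefix k x : cantor x ->
  prefix_sum 3 k (cantor_digit (cantor_word x)) <= x <=
  prefix_sum 3 k (cantor_digit (cantor_word x)) + (3 ^+ k)^-1.
Proof.
elim: k x => [|k IH] x cx.
  by rewrite /= expr0 invr1 add0r; apply: cantor_step_itv (cx 0%N).
have shift_tail : prefix_sum 3 k (tail (cantor_digit (cantor_word x))) =
    prefix_sum 3 k (cantor_digit (cantor_word (cantor_shift x))) :> R.
  by apply: eq_prefix_sum => j _; rewrite /tail /cantor_digit /cantor_word iterSr.
rewrite prefix_sumS shift_tail.
have /andP [] := IH _ (cantor_shift_cantor cx).
rewrite exprS invfM /cantor_digit /cantor_word /= /cantor_shift.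
by case: ifP => x_ge h1 h2; apply/andP; split; lra.
Qed.

Lemma cantor_wordK x : cantor x -> cantor_point (cantor_word x) = x.
Proof.
move=> cx; symmetry; apply: expansion_unique (digit_seq_cantor _) _ => // k.
exact: cantor_word_prefix.
Qed.

End CantorCoding.

Lemma continuous_pair (T U V : topologicalType) (f : T -> U) (g : T -> V) :
  continuous f -> continuous g -> continuous (fun x => (f x, g x)).
Proof. by move=> cf cg x; apply: (@cvg_pair _ _ _ _ _ _ _ _ _ _ _ (cf x) (cg x)). Qed.

Section Compactness.
Context {R : realType}.
Local Notation I := (@unit_cube R).
Implicit Types (A : set (pt R)).

Lemma digit_unmap_continuous d : continuous (@digit_unmap R d).
Proof.
have affine (f : pt R -> R) (c : R) : continuous f -> continuous (fun p => 5 * f p - c).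
  by move=> cf p; apply: cvgB; [apply: cvgM; [exact: cvg_cst | exact: cf] | exact: cvg_cst].
apply: continuous_pair; first apply: continuous_pair.
all: apply: affine => p.
- by apply: cvg_comp; apply: cvg_fst.
- by apply: cvg_comp; [apply: cvg_fst | apply: cvg_snd].
- exact: cvg_snd.
Qed.

Lemma T_closed i A : closed A -> closed (T i A).
Proof.
move=> cA; rewrite T_preimage; apply: closed_bigcup; first exact: finite_Dig.
move=> d _; move: cA; apply: (continuous_closedP (digit_unmap d)).1.
exact: digit_unmap_continuous.
Qed.

Lemma Tw_closed a k A : closed A -> closed (Tw a k A).
Proof. by elim: k A => [//|k IH] A cA /=; apply/IH/T_closed. Qed.

Lemma unit_cube_compact : compact I.
Proof.
have -> : I = `[0, 1] `*` `[0, 1] `*` `[0, 1].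
  apply/seteqP; split => -[[x y] z]; rewrite /unit_cube /= !in_itv /=.
  - by case=> [x01 [y01 z01]].
  - by case=> [[x01 y01] z01].
by apply: compact_setX; [apply: compact_setX |]; apply: segment_compact.
Qed.

Lemma Kc_compact a : compact (@Kc R a).
Proof.
apply: subclosed_compact unit_cube_compact (@Kc_unit_cube R a).
rewrite Kc_bigcap; apply: closed_bigI => k _; apply: Tw_closed.
exact: compact_closed unit_cube_compact.
Qed.

End Compactness.

Section ComponentCoding.
Context {R : realType}.
Local Notation Kc := (@Kc R).
Local Notation Qc := (@Qc R).
Local Notation cantor := (@cantor R).
Implicit Types (A : set (pt R)) (a b : nat -> bool).

Definition component_word A : nat -> bool :=
  if pselect (exists a, A = Kc a) is left h then proj1_sig (cid h) else fun=> false.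

Definition phi A : R := cantor_point (component_word A).

Lemma component_word_Kc a : component_word (Kc a) = a.
Proof.
rewrite /component_word; case: pselect => [h | []]; last by exists a.
by case: (cid h) => b /= ab; rewrite (Kc_inj ab).
Qed.

Lemma phi_Kc a : phi (Kc a) = cantor_point a.
Proof. by rewrite /phi component_word_Kc. Qed.

Lemma Qc_self_similar : Qc = (T false @` Qc) `|` (T true @` Qc).
Proof.
apply/seteqP; split.
- move=> _ [a ->]; rewrite Kc_tail.
  by case: (a 0%N); [right | left]; exists (Kc (tail a)) => //; exists (tail a).
- by move=> _ [] [_ [a ->] <-]; rewrite T_Kc; eexists.
Qed.

Lemma phi_image : phi @` Qc = cantor.
Proof.
apply/seteqP; split => [_ [_ [a ->] <-] | x cx].
- by rewrite phi_Kc; apply: cantor_point_cantor.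
- by exists (Kc (cantor_word x)); [exists (cantor_word x) | rewrite phi_Kc cantor_wordK].
Qed.

(* 3^-n = 3 * 3^-(n+1) and 3^-(n+1) <= sqrt (5^-(n+1)), since 9 >= 5. *)
Lemma inv_expr3_le_powR_half (h : R) n : (5 ^+ n.+1)^-1 <= h ->
  (3 ^+ n)^-1 <= 3 * h `^ 2^-1.
Proof.
move=> h_ge.
have inv5_ge0 : 0 <= (5 ^+ n.+1)^-1 :> R by rewrite invr_ge0 exprn_ge0.
have inv3_ge0 : 0 <= (3 ^+ n.+1)^-1 :> R by rewrite invr_ge0 exprn_ge0.
have sqrt_le : Num.sqrt ((5 ^+ n.+1)^-1) <= h `^ 2^-1.
  rewrite -powR12_sqrt //; apply: ge0_ler_powR => //; rewrite ?invr_ge0 // nnegrE.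
  exact: le_trans h_ge.
have inv3_le : (3 ^+ n.+1)^-1 <= Num.sqrt ((5 ^+ n.+1)^-1) :> R.
  rewrite -[X in X <= _](ger0_norm inv3_ge0) -sqrtr_sqr ler_sqrt //.
  rewrite -exprVn -exprM mulnC exprM !exprVn lef_pV2 ?posrE ?exprn_gt0 //.
  by rewrite -!natrX ler_nat leq_exp2r.
have -> : (3 ^+ n)^-1 = 3 * (3 ^+ n.+1)^-1 :> R.
  by rewrite exprS invfM; field; rewrite expf_neq0.
by rewrite ler_wpM2l // (le_trans inv3_le).
Qed.

Lemma phi_holder a b :
  `|phi (Kc a) - phi (Kc b)| <= 3 * hausdorff (Kc a) (Kc b) `^ 2^-1.
Proof.
rewrite !phi_Kc; have [/funext <- | /existsNP [j /eqP abj]] := pselect (forall j, a j = b j).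
  by rewrite subrr normr0 mulr_ge0 ?powR_ge0.
have [n _ [abn ne]] := first_diff abj.
apply: le_trans (cantor_point_agree abn) _.
exact/inv_expr3_le_powR_half/hausdorff_Kc_ge.
Qed.

Lemma phi_inverse_continuous a eps : 0 < eps -> exists2 delta : R, 0 < delta &
  forall b, `|phi (Kc a) - phi (Kc b)| < delta -> hausdorff (Kc a) (Kc b) < eps.
Proof.
move=> eps_gt0; have [n n_eps] : exists n, (5 ^+ n)^-1 < eps / 2 :> R.
  by apply: exists_inv_expq_lt; rewrite ?divr_gt0.
exists (3 ^+ n)^-1; first by rewrite invr_gt0 exprn_gt0.
move=> b; rewrite !phi_Kc => /cantor_point_close /hausdorff_Kc_le /le_lt_trans; apply.
by rewrite mulrC -ltr_pdivlMr.
Qed.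

End ComponentCoding.

Theorem theorem3 (R : realType) :
  (* Q is a subset of C(R^3) *)
  (forall alpha : nat -> bool,
      @Kc R alpha !=set0 /\ compact (@Kc R alpha : set (R * R * R))) /\
  (* Q = T~_0(Q) u T~_1(Q) *)
  @Qc R = (T false @` @Qc R) `|` (T true @` @Qc R) /\
  (* a Hoelder homeomorphism phi : Q -> C_{1/3} conjugating T~_i to S_i *)
  exists phi : set (pt R) -> R,
    (forall A B, @Qc R A -> @Qc R B -> phi A = phi B -> A = B) /\
    phi @` @Qc R = @cantor R /\
    (exists (C gamma : R), 0 < gamma /\
       forall A B, @Qc R A -> @Qc R B ->
         `|phi A - phi B| <= C * (hausdorff A B) `^ gamma) /\
    (forall A, @Qc R A -> forall eps : R, 0 < eps ->
       exists2 delta : R, 0 < delta &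
         forall B, @Qc R B -> `|phi A - phi B| < delta ->
           hausdorff A B < eps) /\
    (forall A, @Qc R A ->
       phi (T false A) = S0 (phi A) /\ phi (T true A) = S1 (phi A)).
Proof.
split; first by move=> a; split; [exact: Kc_neq0 | exact: Kc_compact].
split; first exact: Qc_self_similar.
exists phi; split.
  by move=> _ _ [a ->] [b ->]; rewrite !phi_Kc => /cantor_point_inj ->.
split; first exact: phi_image.
split.
  exists 3, 2^-1; split=> [|_ _ [a ->] [b ->]]; last exact: phi_holder.
  by rewrite invr_gt0.
split.
  move=> _ [a ->] eps /(phi_inverse_continuous a) [delta delta_gt0 close].
  by exists delta => // _ [b ->]; apply: close.
by move=> _ [a ->]; rewrite !T_Kc !phi_Kc !cantor_point_wcons.
Qed.
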